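(* Let $U$ be a subgroup of $G^*$. Then: (i) the matching mechanism $C^U$ is $U$-symmetric; (ii) if $F$ is a resolute and $U$-symmetric matching mechanism, then $F(p)\subseteq C^U(p)$ for every $p\in\mathcal{P}$.
   Context: Fix $n\ge 2$, $W=\{1,\dots,n\}$, $M=\{n+1,\dots,2n\}$, $I=W\cup M$. Permutations compose right-to-left. A preference profile is a function $p$ on $I$ assigning to each $x\in W$ a linear order $p(x)$ on $M$ and to each $y\in M$ a linear order $p(y)$ on $W$; $\mathcal{P}$ is the set of preference profiles. A matching is a permutation $\mu$ of $I$ with $\mu(W)=M$, $\mu(M)=W$, $\mu(\mu(z))=z$ for all $z$; $\mathcal{M}$ is the set of matchings. $G^*=\{\varphi\in\mathrm{Sym}(I):\{\varphi(W),\varphi(M)\}=\{W,M\}\}$. For a linear order $R$ on $X\subseteq I$ and $\varphi\in\mathrm{Sym}(I)$, $\varphi R$ is the relation on $\varphi(X)$ with $(a,b)\in\varphi R$ iff $(\varphi^{-1}(a),\varphi^{-1}(b))\in R$. For $p\in\mathcal{P}$, $\varphi\in G^*$, $p^\varphi(z)=\varphi\,p(\varphi^{-1}(z))$. For a permutation $\mu$, $\mu^\varphi=\varphi\mu\varphi^{-1}$; $S^\varphi=\{\mu^\varphi:\mu\in S\}$. A matching mechanism is a correspondence $F$ from $\mathcal{P}$ to $\mathcal{M}$; resolute if $|F(p)|=1$ for all $p$; $U$-symmetric if $F(p^\varphi)=F(p)^\varphi$ for all $p$ and $\varphi\in U$. For $U\le G^*$ and $p\in\mathcal{P}$, $\mathrm{Stab}_U(p)=\{\varphi\in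 U:p^\varphi=p\}$, and $C^U$ is the matching mechanism $C^U(p)=\{\mu\in\mathcal{M}:\mu^\varphi=\mu\text{ for all }\varphi\in\mathrm{Stab}_U(p)\}$. *)

From mathcomp Require Import all_boot all_fingroup.
Set Implicit Arguments. Unset Strict Implicit. Unset Printing Implicit Defensive.

(* Agents I = {1,..,2n} are represented 0-based by 'I_(n+n):
   W = {0,..,n-1} (paper's {1..n}),  M = {n,..,2n-1} (paper's {n+1..2n}). *)
Notation agent n := 'I_(n + n).

Section Defs.
Variable n : nat.
Local Notation T := (agent n).

Definition Wset : {set T} := [set i : T | i < n].
Definition Mset : {set T} := [set i : T | n <= i].

Definition is_linorder (X : {set T}) (R : {set T * T}) : bool :=
  [&& R \subset setX X X,
      [forall x in X, (x, x) \in R],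
      [forall x in X, forall y in X, ((x, y) \in R) && ((y, x) \in R) ==> (x == y)],
      [forall x in X, forall y in X, forall z in X,
          ((x, y) \in R) && ((y, z) \in R) ==> ((x, z) \in R)]
    & [forall x in X, forall y in X, ((x, y) \in R) || ((y, x) \in R)]].

Definition profile := {ffun T -> {set T * T}}.

Definition is_profile (p : profile) : bool :=
  [forall x in Wset, is_linorder Mset (p x)] &&
  [forall y in Mset, is_linorder Wset (p y)].

Definition is_matching (mu : {perm T}) : bool :=
  [&& mu @: Wset == Mset, mu @: Mset == Wset & [forall z, mu (mu z) == z]].

Definition matchings : {set {perm T}} := [set mu | is_matching mu].

Definition Gstar : {set {perm T}} :=
  [set phi : {perm T} | [set phi @: Wset; phi @: Mset] == [set Wset; Mset]].

Definition rel_act (phi : {perm T}) (R : {set T * T}) : {set T * T} :=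
  [set ab : T * T | ((phi^-1)%g ab.1, (phi^-1)%g ab.2) \in R].

Definition prof_act (phi : {perm T}) (p : profile) : profile :=
  [ffun z => rel_act phi (p ((phi^-1)%g z))].

(* μ^φ = φ μ φ^{-1} (right-to-left composition), i.e. the function
   z ↦ φ (μ (φ^{-1} z)).  In MathComp, (s * t) z = t (s z), so this is
   the permutation φ^{-1} * μ * φ. *)
Definition mconj (phi mu : {perm T}) : {perm T} := ((phi^-1) * mu * phi)%g.

Definition conjset (phi : {perm T}) (S : {set {perm T}}) : {set {perm T}} :=
  [set mconj phi mu | mu in S].

Definition Stab (U : {set {perm T}}) (p : profile) : {set {perm T}} :=
  [set phi in U | prof_act phi p == p].

Definition CU (U : {set {perm T}}) (p : profile) : {set {perm T}} :=
  [set mu | is_matching mu & [forall phi in Stab U p, mconj phi mu == mu]].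

(* A matching mechanism: a correspondence 𝒫 → ℳ (values on non-profiles are
   irrelevant). *)
Definition is_mechanism (F : profile -> {set {perm T}}) : Prop :=
  forall p, is_profile p -> F p \subset matchings.

Definition resolute (F : profile -> {set {perm T}}) : Prop :=
  forall p, is_profile p -> #|F p| = 1.

Definition Usymmetric (U : {set {perm T}}) (F : profile -> {set {perm T}}) : Prop :=
  forall p phi, is_profile p -> phi \in U -> F (prof_act phi p) = conjset phi (F p).

End Defs.

Lemma mconjE n (phi mu : {perm agent n}) z :
  mconj phi mu z = phi (mu ((phi^-1)%g z)).
Proof. by rewrite /mconj !permM. Qed.

(* A matching is an involution exchanging W and its complement, and phi in
   G* permutes {W, ~W}; hence conjugation by phi in U preserves the set of
   matchings.  It also carries Stab_U(p) to Stab_U(p^phi), so C^U(p), the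
   set of matchings centralising Stab_U(p), is carried to C^U(p^phi); this
   is (i).  For (ii), if F(p) = {nu} and phi stabilises p, symmetry gives
   {nu} = F(p^phi) = {nu^phi}, so nu commutes with every element of
   Stab_U(p). *)
From mathcomp Require Import all_boot all_fingroup.

Set Implicit Arguments. Unset Strict Implicit. Unset Printing Implicit Defensive.

Local Open Scope group_scope.

Section ExchangingPermutations.
Variables (T : finType) (A : {set T}).

Lemma perm_imsetC (s : {perm T}) (B : {set T}) : s @: (~: B) = ~: (s @: B).
Proof. by rewrite -[s]invgK !im_permV preimsetC. Qed.

Lemma imset_conjg (phi mu : {perm T}) (B : {set T}) :
  (mu ^ phi) @: B = phi @: (mu @: (phi^-1 @: B)).
Proof. by rewrite -!imset_comp; apply: eq_imset => x /=; rewrite !permM. Qed.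

Lemma exchange_conjg (phi mu : {perm T}) :
  phi^-1 @: A \in [set A; ~: A] -> mu @: A = ~: A ->
  (mu ^ phi) @: A = ~: A.
Proof.
move=> phiA muA.
have phiK : phi @: (phi^-1 @: A) = A.
  rewrite -imset_comp -[RHS]imset_id.
  by apply: eq_imset => x /=; rewrite permKV.
have muB : mu @: (phi^-1 @: A) = ~: (phi^-1 @: A).
  by case/set2P: phiA => ->; rewrite ?perm_imsetC muA ?setCK.
by rewrite imset_conjg muB perm_imsetC phiK.
Qed.

End ExchangingPermutations.

Section Agents.
Variable n : nat.
Local Notation T := (agent n).
Local Notation W := (Wset n).

Lemma MsetC : Mset n = ~: W.
Proof. by apply/setP => x; rewrite !inE leqNgt. Qed.

Lemma is_matchingE (mu : {perm T}) :
  is_matching mu = (mu @: W == ~: W) && (mu * mu == 1).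
Proof.
rewrite /is_matching MsetC perm_imsetC (can2_eq setCK setCK) andbA andbb.
congr andb; apply/forallP/eqP => [muK | muK z].
  by apply/permP => z; rewrite permM perm1; apply/eqP.
by rewrite -permM muK perm1.
Qed.

Lemma Gstar_imsetW (phi : {perm T}) :
  phi \in Gstar n -> phi @: W \in [set W; ~: W].
Proof. by rewrite inE -MsetC => /eqP <-; rewrite set21. Qed.

Lemma matching_conjg (phi mu : {perm T}) :
  phi^-1 \in Gstar n -> is_matching mu -> is_matching (mu ^ phi).
Proof.
move=> /Gstar_imsetW phiW; rewrite !is_matchingE => /andP[/eqP muW /eqP muK].
by rewrite -conjMg muK conj1g eqxx andbT exchange_conjg.
Qed.

Lemma Gstar_normalises_matchings (G : {group {perm T}}) :
  G \subset Gstar n -> G \subset 'N(matchings n).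
Proof.
move=> sGGstar; apply/normsP => phi phiG; apply/eqP.
rewrite eqEcard cardJg leqnn andbT; apply/subsetP => _ /imsetP[mu muM ->].
move: muM; rewrite !inE; apply: matching_conjg.
by rewrite (subsetP sGGstar) ?groupV.
Qed.

Lemma prof_actM (phi psi : {perm T}) (p : profile n) :
  prof_act phi (prof_act psi p) = prof_act (psi * phi) p.
Proof.
apply/ffunP => z; apply/setP => -[a b].
by rewrite !ffunE !inE /= ?ffunE ?inE /= invMg !permM.
Qed.

Lemma prof_act1 (p : profile n) : prof_act 1 p = p.
Proof.
apply/ffunP => z; apply/setP => -[a b].
by rewrite !ffunE !inE invg1 !perm1.
Qed.

Lemma prof_actK (phi : {perm T}) : cancel (prof_act phi) (prof_act phi^-1).
Proof. by move=> p; rewrite prof_actM mulgV prof_act1. Qed.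

Lemma mconjJ (phi mu : {perm T}) : mconj phi mu = mu ^ phi.
Proof. by rewrite /mconj /conjg mulgA. Qed.

Lemma conjsetE (phi : {perm T}) (S : {set {perm T}}) : conjset phi S = S :^ phi.
Proof. exact: eq_imset (mconjJ phi). Qed.

Lemma Stab_prof_act (G : {group {perm T}}) (phi : {perm T}) (p : profile n) :
  phi \in G -> Stab G (prof_act phi p) = Stab G p :^ phi.
Proof.
move=> phiG; apply/setP => chi; rewrite mem_conjg !inE groupJr ?groupV //.
congr andb; rewrite -(inj_eq (can_inj (prof_actK phi^-1))).
by rewrite prof_actK !prof_actM /conjg invgK mulgA.
Qed.

Lemma CU_cent (G : {group {perm T}}) (p : profile n) :
  CU G p = matchings n :&: 'C(Stab G p).
Proof.
apply/setP => mu; rewrite !inE; congr andb.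
apply/forall_inP/centP => muC phi /muC; rewrite mconjJ.
  by move/eqP/conjg_fixP/commgP.
by move/commgP/conjg_fixP->.
Qed.

Lemma CU_symmetric (G : {group {perm T}}) :
  G \subset Gstar n -> Usymmetric G (CU G).
Proof.
move=> sGGstar p phi _ phiG.
rewrite conjsetE !CU_cent Stab_prof_act // centJ conjIg.
by rewrite (normsP (Gstar_normalises_matchings sGGstar)).
Qed.

Lemma resolute_symmetric_sub_CU (G : {group {perm T}})
    (F : profile n -> {set {perm T}}) :
  is_mechanism F -> resolute F -> Usymmetric G F ->
  forall p, is_profile p -> F p \subset CU G p.
Proof.
move=> Fmatch Fres Fsym p pP.
have [nu Fp] := cards1P (introT eqP (Fres p pP)).
have nuM : nu \in matchings n by rewrite (subsetP (Fmatch p pP)) // Fp set11.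
rewrite Fp sub1set CU_cent inE nuM; apply/centP => phi /setIdP[phiG /eqP phip].
have := Fsym p phi pP phiG.
rewrite phip Fp conjsetE conjg_set1 => /set1_inj nuJ.
by apply/commgP/conjg_fixP; rewrite -nuJ.
Qed.

End Agents.

Theorem proposition3 (n : nat) (hn : 2 <= n)
    (U : {group {perm agent n}}) (hU : U \subset Gstar n) :
  Usymmetric U (CU U) /\
  (forall F : profile n -> {set {perm agent n}},
      is_mechanism F -> resolute F -> Usymmetric U F ->
      forall p : profile n, is_profile p -> F p \subset CU U p).
Proof. by split; [exact: CU_symmetric | exact: resolute_symmetric_sub_CU]. Qed.
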